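(* Let $\varphi:(0,\infty)\to\mathbb{R}$ be $\varphi(s)=\dfrac{s}{\sinh^2(\pi s)}$, and let $V:\mathbb{R}\setminus\{0\}\to\mathbb{R}$ be the even function given for $s>0$ by $$V(s)=\frac{1}{\pi}\,s\coth(\pi s)-\frac{1}{\pi^2}\log\bigl(2\sinh(\pi s)\bigr),$$ and by $V(-s)=V(s)$. For $t>0$ define $\varphi_{\mathrm{eff}}(t):=\sum_{k=1}^\infty k\,\varphi(kt)$. Then $$\lim_{t\to 0^+} t^2\,\varphi_{\mathrm{eff}}(t)=\frac12\int_{-\infty}^{\infty}V(s)\,ds,$$ i.e. $\varphi_{\mathrm{eff}}(t)\approx \dfrac{1}{2t^2}\displaystyle\int_{-\infty}^{\infty}V$ as $t\to0$.
   Context: On $(0,\infty)$, $V$ is the primitive of $-\varphi$ that decays to zero at infinity ($V'=-\varphi$). The function $\varphi$ is the interaction stress between two infinite walls of edge dislocations (with in-wall spacing normalized to $1$), $V$ is the corresponding interaction energy, and $\varphi_{\mathrm{eff}}$ is the effective stress summing the contributions of all $k$-th neighbours in an equispaced array of walls. *)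

From Stdlib Require Import Reals.
From Coquelicot Require Import Coquelicot.
Open Scope R_scope.

Definition phi (s : R) : R := s / (sinh (PI * s)) ^ 2.

Definition Vpos (s : R) : R :=
  / PI * s * (cosh (PI * s) / sinh (PI * s)) - / (PI ^ 2) * ln (2 * sinh (PI * s)).

(* even extension V(s) = V(|s|); the value at s = 0 is irrelevant (never used) *)
Definition V (s : R) : R := Vpos (Rabs s).

(* phi_eff(t) = sum_{k>=1} k phi(k t), reindexed from k = 0 as (k+1) *)
Definition phi_eff_term (t : R) (k : nat) : R := INR (S k) * phi (INR (S k) * t).
Definition phi_eff (t : R) : R := Series (phi_eff_term t).

(* Put psi(s) = s phi(s) = (s / sinh (pi s))^2, a positive, bounded, nonincreasing function
   with a finite integral J over (0, oo). Then t^2 phi_eff(t) = sum_(k >= 1) t psi(k t) is a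
   Riemann sum of psi with mesh t, squeezed by monotonicity between integrals of psi, so it
   tends to J as t -> 0+. On the other side (s V(s))' = V(s) - psi(s), and s V(s) -> 0 both
   at 0+ (like s log s) and at +oo (exponentially), so the integral of V over (0, oo) is also J;
   V being even, so is its integral over (-oo, 0), and the limit is (J + J) / 2. *)

From Stdlib Require Import Reals Lra Psatz Classical.
From Coquelicot Require Import Coquelicot.
Open Scope R_scope.

Lemma PI_gt_3 : 3 < PI.
Proof. generalize PI2_3_2; lra. Qed.

Lemma le_of_derive_nonneg (f df : R -> R) (a b : R) : a <= b ->
  (forall x, a <= x <= b -> is_derive f x (df x)) ->
  (forall x, a <= x <= b -> 0 <= df x) -> f a <= f b.
Proof.
  intros hab hd hpos.
  destruct (MVT_gen f a b df) as [c [hc e]];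
    rewrite ?Rmin_left, ?Rmax_right in * by lra.
  - intros x hx. apply hd; lra.
  - intros x hx. apply continuity_pt_filterlim, (ex_derive_continuous f).
    eexists; apply hd; lra.
  - assert (0 <= df c * (b - a)) by (apply Rmult_le_pos; [apply hpos|]; lra).
    lra.
Qed.

Lemma sinh_pos x : 0 < x -> 0 < sinh x.
Proof. intros. rewrite <- sinh_0. now apply sinh_lt. Qed.

Lemma cosh_ge_1 x : 1 <= cosh x.
Proof.
  unfold cosh. rewrite exp_Ropp.
  assert (hy := exp_pos x). assert (hiy := Rinv_0_lt_compat _ hy).
  assert (exp x * / exp x = 1) by (field; lra).
  assert (0 <= (exp x - 1) ^ 2 * / exp x) by (apply Rmult_le_pos; [apply pow2_ge_0 | lra]).
  nra.
Qed.

Lemma sinh_ge_id x : 0 <= x -> x <= sinh x.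
Proof.
  intros hx. enough (sinh 0 - 0 <= sinh x - x) by (rewrite sinh_0 in *; lra).
  apply (le_of_derive_nonneg (fun x => sinh x - x) (fun x => cosh x - 1)); auto.
  - intros y _. unfold sinh, cosh. auto_derive; [auto | field].
  - intros y _. generalize (cosh_ge_1 y); lra.
Qed.

Lemma sinh_le_mul_cosh x : 0 <= x -> sinh x <= x * cosh x.
Proof.
  intros hx. enough (0 * cosh 0 - sinh 0 <= x * cosh x - sinh x) by (rewrite sinh_0 in *; lra).
  apply (le_of_derive_nonneg (fun x => x * cosh x - sinh x) (fun x => x * sinh x)); auto.
  - intros y _. unfold sinh, cosh. auto_derive; [auto | field].
  - intros y hy. apply Rmult_le_pos; [| generalize (sinh_ge_id y)]; lra.
Qed.

Lemma exp_ge_1_cube x : 0 <= x -> 1 + x ^ 3 / 6 <= exp x.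
Proof.
  intros hx. eapply Rle_trans; [| apply (exp_ge_taylor x 3 hx)].
  simpl. assert (0 <= x * x) by nra. assert (0 <= x * (x * x)) by nra. lra.
Qed.

Lemma exp_opp_le_1 x : 0 <= x -> exp (- x) <= 1.
Proof.
  intros hx. rewrite exp_Ropp, <- Rinv_1.
  apply Rinv_le_contravar; [lra | generalize (exp_ineq1_le x); lra].
Qed.

Lemma sinh_ge_cube x : 0 <= x -> x ^ 3 / 12 <= sinh x.
Proof.
  intros hx. unfold sinh. generalize (exp_ge_1_cube x hx) (exp_opp_le_1 x hx). lra.
Qed.

Lemma ln_le_sub_1 w : 0 < w -> ln w <= w - 1.
Proof.
  intros hw. rewrite <- (ln_exp (w - 1)).
  apply ln_le; [exact hw | generalize (exp_ineq1_le (w - 1)); lra].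
Qed.

Lemma abs_ln_le z : 0 < z -> Rabs (ln z) <= z + 2 / sqrt z.
Proof.
  intros hz. assert (hs : 0 < sqrt z) by (apply sqrt_lt_R0; exact hz).
  assert (0 < 2 / sqrt z) by (apply Rdiv_lt_0_compat; lra).
  destruct (Rle_lt_dec z 1) as [h|h].
  - assert (ln z <= 0) by (rewrite <- ln_1; apply ln_le; lra).
    rewrite Rabs_left1 by assumption.
    assert (e : ln z = - 2 * ln (/ sqrt z)).
    { rewrite ln_Rinv, <- (sqrt_sqrt z) at 1 by lra. rewrite ln_mult by lra. ring. }
    generalize (ln_le_sub_1 (/ sqrt z) (Rinv_0_lt_compat _ hs)). unfold Rdiv. lra.
  - assert (0 <= ln z) by (rewrite <- ln_1; apply ln_le; lra).
    rewrite Rabs_pos_eq by assumption. generalize (ln_le_sub_1 z hz). lra.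
Qed.

Lemma eventually_pos_pair :
  filter_prod (at_right 0) (Rbar_locally p_infty) (fun ab => 0 < fst ab /\ 0 < snd ab).
Proof.
  exists (fun a => 0 < a) (fun b => 0 < b); auto.
  - exists (mkposreal 1 Rlt_0_1). intros y _ hy. exact hy.
  - exists 0. intros x hx. exact hx.
Qed.

Lemma filterlim_RInt_of_is_RInt_gen {Fa Fb : (R -> Prop) -> Prop}
    {FFa : Filter Fa} {FFb : Filter Fb} (f : R -> R) (l : R) :
  filter_prod Fa Fb (fun ab => ex_RInt f (fst ab) (snd ab)) ->
  is_RInt_gen f Fa Fb l ->
  filterlim (fun ab => RInt f (fst ab) (snd ab)) (filter_prod Fa Fb) (locally l).
Proof.
  intros hex hl P hP. unfold filtermap.
  generalize (filter_and _ _ hex (hl P hP)). apply filter_imp.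
  intros [a b] [_ [y [hy hPy]]]. simpl in *. now rewrite (is_RInt_unique f a b y hy).
Qed.

Lemma is_RInt_gen_of_filterlim_RInt (f : R -> R) (l : R) :
  (forall a b, 0 < a -> 0 < b -> ex_RInt f a b) ->
  filterlim (fun ab => RInt f (fst ab) (snd ab))
    (filter_prod (at_right 0) (Rbar_locally p_infty)) (locally l) ->
  is_RInt_gen f (at_right 0) (Rbar_locally p_infty) l.
Proof.
  intros hex hl. refine (filterlimi_lim_ext_loc _ _ _ hl).
  generalize eventually_pos_pair. apply filter_imp.
  intros [a b] [ha hb]. apply (RInt_correct (V := R_CompleteNormedModule)), hex; assumption.
Qed.

Lemma RInt_ge_0_pos (f : R -> R) (a b : R) :
  (forall x, 0 < x -> 0 <= f x) -> 0 < a -> a <= b -> ex_RInt f a b -> 0 <= RInt f a b.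
Proof. intros hf ha hab hex. apply RInt_ge_0; auto. intros x hx. apply hf; lra. Qed.

(* The improper integral is the supremum of the integrals over compact subintervals. *)
Lemma is_RInt_gen_of_nonneg_bounded (f : R -> R) (C : R) :
  (forall a b, 0 < a -> 0 < b -> ex_RInt f a b) ->
  (forall x, 0 < x -> 0 <= f x) ->
  (forall a b, 0 < a -> a <= b -> RInt f a b <= C) ->
  exists J : R, is_RInt_gen f (at_right 0) (Rbar_locally p_infty) J.
Proof.
  intros hex hpos hC.
  set (P y := exists a b, 0 < a <= b /\ y = RInt f a b).
  assert (hbound : bound P) by (exists C; intros y [a [b [hab ->]]]; apply hC; lra).
  assert (hne : exists y, P y) by (exists (RInt f 1 1), 1, 1; split; [lra | reflexivity]).
  destruct (completeness P hbound hne) as [J [hJub hJlub]].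
  exists J. apply is_RInt_gen_of_filterlim_RInt; [exact hex |].
  apply filterlim_locally. intros eps.
  destruct (classic (exists a0 b0, 0 < a0 <= b0 /\ J - eps < RInt f a0 b0))
    as [[a0 [b0 [hab0 hgt]]] | hno].
  2:{ exfalso. assert (J <= J - eps); [| generalize (cond_pos eps); lra].
      apply hJlub. intros y [a [b [hab ->]]].
      destruct (Rle_lt_dec (RInt f a b) (J - eps)) as [h|h]; [exact h |].
      exfalso. apply hno. exists a, b. auto. }
  exists (fun a => 0 < a < a0) (fun b => b0 < b).
  - exists (mkposreal a0 ltac:(lra)). intros y hy hy0.
    change (Rabs (y - 0) < a0) in hy. apply Rabs_lt_between in hy. lra.
  - exists b0. auto.
  - intros a b ha hb. change (Rabs (RInt f a b - J) < eps).
    assert (hsplit : RInt f a b = RInt f a a0 + RInt f a0 b0 + RInt f b0 b).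
    { rewrite <- (RInt_Chasles f a a0 b), <- (RInt_Chasles f a0 b0 b) by (apply hex; lra).
      unfold plus; simpl; ring. }
    assert (RInt f a b <= J) by (apply hJub; exists a, b; split; [lra | reflexivity]).
    generalize (RInt_ge_0_pos f a a0 hpos ltac:(lra) ltac:(lra) ltac:(apply hex; lra))
      (RInt_ge_0_pos f b0 b hpos ltac:(lra) ltac:(lra) ltac:(apply hex; lra)).
    intros. apply Rabs_lt_between. lra.
Qed.

Lemma is_RInt_gen_even (f : R -> R) (J : R) :
  (forall x, f (- x) = f x) ->
  is_RInt_gen f (at_right 0) (Rbar_locally p_infty) J ->
  is_RInt_gen f (Rbar_locally m_infty) (at_left 0) J.
Proof.
  intros hf hJ P hP. destruct (hJ P hP) as [Qa Qb hQa hQb hQ].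
  exists (fun a => Qb (- a)) (fun b => Qa (- b)).
  - destruct hQb as [M hM]. exists (- M). intros x hx. apply hM. lra.
  - destruct hQa as [e he]. exists e. intros y hy hy0. apply he; [| lra].
    change (Rabs (- y - 0) < e). change (Rabs (y - 0) < e) in hy.
    rewrite Rminus_0_r, Rabs_Ropp in *. exact hy.
  - intros x y hx hy. destruct (hQ (- y) (- x) hy hx) as [z [hz hPz]].
    exists z. split; [| exact hPz]. simpl in *.
    apply is_RInt_swap, (is_RInt_comp_opp (V := R_NormedModule)),
      (is_RInt_opp (V := R_NormedModule)) in hz.
    replace z with (opp (opp z)) by (unfold opp; simpl; ring).
    revert hz. apply is_RInt_ext. intros s _. unfold opp; simpl. rewrite hf. ring.
Qed.

Lemma is_RInt_gen_add_vanishing_derive (f g U : R -> R) (J : R) :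
  (forall x, 0 < x -> is_derive U x (f x - g x)) ->
  (forall x, 0 < x -> continuous f x) ->
  (forall x, 0 < x -> continuous g x) ->
  filterlim U (at_right 0) (locally 0) ->
  filterlim U (Rbar_locally p_infty) (locally 0) ->
  is_RInt_gen g (at_right 0) (Rbar_locally p_infty) J ->
  is_RInt_gen f (at_right 0) (Rbar_locally p_infty) J.
Proof.
  intros hU hf hg hU0 hUoo hJ.
  assert (hDU : forall x, 0 < x -> Derive U x = f x - g x)
    by (intros x hx; apply is_derive_unique, hU, hx).
  assert (hpos : filter_prod (at_right 0) (Rbar_locally p_infty)
           (fun ab => forall x, Rmin (fst ab) (snd ab) <= x <= Rmax (fst ab) (snd ab) -> 0 < x)).
  { generalize eventually_pos_pair. apply filter_imp. intros [a b] [ha hb] x hx. simpl in *.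
    assert (0 < Rmin a b) by (apply Rmin_glb_lt; assumption). lra. }
  assert (hint : is_RInt_gen (Derive U) (at_right 0) (Rbar_locally p_infty) (0 - 0)).
  { apply is_RInt_gen_Derive; auto; generalize hpos; apply filter_imp; intros ab hab x hx.
    - eexists. apply hU, hab, hx.
    - apply (continuous_ext_loc _ (fun y => f y - g y)).
      + assert (hx0 := hab x hx). exists (mkposreal x hx0). intros y hy.
        symmetry. apply hDU. change (Rabs (y - x) < x) in hy. apply Rabs_lt_between in hy. lra.
      + apply (continuous_minus (V := R_NormedModule)); [apply hf | apply hg]; apply hab, hx. }
  replace J with (plus (0 - 0) J) by (unfold plus; simpl; ring).
  apply (is_RInt_gen_ext (fun x => plus (Derive U x) (g x))).
  - generalize hpos. apply filter_imp. intros ab hab x hx.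
    rewrite hDU by (apply hab; lra). unfold plus; simpl; ring.
  - exact (is_RInt_gen_plus _ _ _ _ hint hJ).
Qed.

Section MonotoneRiemannSums.

Variables (f : R -> R) (M J : R).
Hypothesis f_continuous : forall x, 0 < x -> continuous f x.
Hypothesis f_nonneg : forall x, 0 < x -> 0 <= f x.
Hypothesis f_antimono : forall u v, 0 < u -> u <= v -> f v <= f u.
Hypothesis f_le_M : forall x, 0 < x -> f x <= M.
Hypothesis f_improper : is_RInt_gen f (at_right 0) (Rbar_locally p_infty) J.

Definition riemann_term (t : R) (k : nat) : R := t * f (INR (S k) * t).

Lemma ex_RInt_pos (a b : R) : 0 < a -> 0 < b -> ex_RInt f a b.
Proof.
  intros ha hb. apply (ex_RInt_continuous (V := R_CompleteNormedModule)).
  intros z hz. apply f_continuous.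
  assert (0 < Rmin a b) by (apply Rmin_glb_lt; assumption). lra.
Qed.

Lemma RInt_step_bounds (x h : R) : 0 < x -> 0 < h ->
  h * f (x + h) <= RInt f x (x + h) <= h * f x.
Proof.
  intros hx hh.
  assert (hconst : forall c, RInt (fun _ => c) x (x + h) = h * c).
  { intros c. rewrite RInt_const. unfold scal; simpl; unfold mult; simpl. ring. }
  assert (hex : ex_RInt f x (x + h)) by (apply ex_RInt_pos; lra).
  rewrite <- !hconst. split; apply RInt_le; auto using ex_RInt_const; try lra;
    intros y hy; apply f_antimono; lra.
Qed.

Lemma riemann_partial_sum_bounds (t : R) (N : nat) : 0 < t ->
  RInt f t (INR (S (S N)) * t) <= sum_n (riemann_term t) N <=
  t * f t + RInt f t (INR (S N) * t).
Proof.
  intros ht. unfold riemann_term.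
  assert (hnext : forall n, INR (S (S n)) * t = INR (S n) * t + t)
    by (intros n; rewrite (S_INR (S n)); ring).
  assert (hpos : forall n, 0 < INR (S n) * t)
    by (intros n; apply Rmult_lt_0_compat; [apply lt_0_INR; lia | exact ht]).
  induction N as [|N IH].
  - rewrite sum_O, hnext. simpl (INR 1). rewrite Rmult_1_l, RInt_point.
    generalize (RInt_step_bounds t t ht ht). unfold zero; simpl. lra.
  - rewrite sum_Sn, (hnext (S N)). change (plus ?x ?y) with (Rplus x y).
    assert (hchasles : forall x, 0 < x -> RInt f t (x + t) = RInt f t x + RInt f x (x + t)).
    { intros x hx. rewrite <- (RInt_Chasles f t x) by (apply ex_RInt_pos; lra).
      reflexivity. }
    rewrite (hnext N) in IH |- *. set (x := INR (S N) * t) in *.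
    assert (hx := hpos N). fold x in hx.
    generalize (hchasles x hx) (hchasles (x + t) ltac:(lra))
      (RInt_step_bounds x t hx ht) (RInt_step_bounds (x + t) t ltac:(lra) ht).
    lra.
Qed.

Lemma filterlim_RInt_improper :
  filterlim (fun ab => RInt f (fst ab) (snd ab))
    (filter_prod (at_right 0) (Rbar_locally p_infty)) (locally J).
Proof.
  apply filterlim_RInt_of_is_RInt_gen; [| exact f_improper].
  generalize eventually_pos_pair. apply filter_imp.
  intros [a b] [ha hb]. apply ex_RInt_pos; assumption.
Qed.

Lemma RInt_le_improper (a b : R) : 0 < a -> a <= b -> RInt f a b <= J.
Proof.
  intros ha hab.
  apply (filterlim_le (F := filter_prod (at_right 0) (Rbar_locally p_infty))
           (fun _ => RInt f a b) (fun ab => RInt f (fst ab) (snd ab)) (RInt f a b) J);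
    [| apply filterlim_const | exact filterlim_RInt_improper].
  exists (fun a' => 0 < a' < a) (fun b' => b < b').
  - exists (mkposreal a ha). intros y hy hy0.
    change (Rabs (y - 0) < a) in hy. apply Rabs_lt_between in hy. lra.
  - exists b. auto.
  - intros a' b' ha' hb'. simpl.
    rewrite <- (RInt_Chasles f a' a b'), <- (RInt_Chasles f a b b')
      by (apply ex_RInt_pos; lra).
    generalize (RInt_ge_0_pos f a' a f_nonneg ltac:(lra) ltac:(lra) ltac:(apply ex_RInt_pos; lra))
      (RInt_ge_0_pos f b b' f_nonneg ltac:(lra) ltac:(lra) ltac:(apply ex_RInt_pos; lra)).
    unfold plus; simpl. lra.
Qed.

Lemma riemann_partial_sum_le (t : R) (N : nat) : 0 < t -> sum_n (riemann_term t) N <= t * M + J.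
Proof.
  intros ht. eapply Rle_trans; [apply riemann_partial_sum_bounds, ht |].
  apply Rplus_le_compat; [apply Rmult_le_compat_l; [lra | apply f_le_M, ht] |].
  apply RInt_le_improper; [exact ht |].
  rewrite <- (Rmult_1_l t) at 1. apply Rmult_le_compat_r; [lra |].
  rewrite S_INR. generalize (pos_INR N). lra.
Qed.

Lemma riemann_partial_sum_incr (t : R) (N : nat) : 0 < t ->
  sum_n (riemann_term t) N <= sum_n (riemann_term t) (S N).
Proof.
  intros ht. rewrite sum_Sn. change (plus ?x ?y) with (Rplus x y).
  enough (0 <= riemann_term t (S N)) by lra.
  apply Rmult_le_pos; [lra | apply f_nonneg, Rmult_lt_0_compat; [apply lt_0_INR; lia | exact ht]].
Qed.

Lemma ex_series_riemann (t : R) : 0 < t -> ex_series (riemann_term t).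
Proof.
  intros ht. destruct (ex_finite_lim_seq_incr (sum_n (riemann_term t)) (t * M + J)) as [l hl].
  - intros n. apply riemann_partial_sum_incr, ht.
  - intros n. apply riemann_partial_sum_le, ht.
  - exists l. exact hl.
Qed.

Lemma Series_riemann_bounds (t : R) : 0 < t ->
  (forall N, RInt f t (INR (S (S N)) * t) <= Series (riemann_term t)) /\
  Series (riemann_term t) <= t * M + J.
Proof.
  intros ht. assert (hlim : is_lim_seq (sum_n (riemann_term t)) (Series (riemann_term t)))
    by exact (Series_correct _ (ex_series_riemann t ht)).
  split.
  - intros N. eapply Rle_trans; [apply riemann_partial_sum_bounds, ht |].
    apply (is_lim_seq_incr_compare _ _ hlim). intros n. apply riemann_partial_sum_incr, ht.
  - apply (is_lim_seq_le _ _ _ _ (fun N => riemann_partial_sum_le t N ht) hlim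
             (is_lim_seq_const _)).
Qed.

Lemma filterlim_Series_riemann :
  filterlim (fun t => Series (riemann_term t)) (at_right 0) (locally J).
Proof.
  apply filterlim_locally. intros eps.
  assert (he : 0 < eps / 2) by (generalize (cond_pos eps); lra).
  destruct (proj1 (filterlim_locally _ J) filterlim_RInt_improper (mkposreal _ he))
    as [Qa Qb hQa [B hB] hQ].
  assert (hM : 0 <= M) by (generalize (f_nonneg 1 Rlt_0_1) (f_le_M 1 Rlt_0_1); lra).
  assert (hsmall : at_right 0 (fun t => t * M < eps / 2)).
  { assert (hd : 0 < eps / 2 / (M + 1)) by (apply Rdiv_lt_0_compat; lra).
    exists (mkposreal _ hd). intros t ht ht0. change (Rabs (t - 0) < eps / 2 / (M + 1)) in ht.
    rewrite Rminus_0_r, Rabs_pos_eq in ht by lra.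
    apply (Rmult_lt_compat_r (M + 1)) in ht; [| lra].
    replace (eps / 2 / (M + 1) * (M + 1)) with (eps / 2) in ht by (field; lra). nra. }
  assert (hpos : at_right 0 (fun t => 0 < t)) by (exists (mkposreal 1 Rlt_0_1); auto).
  generalize (filter_and _ _ hQa (filter_and _ _ hsmall hpos)). apply filter_imp.
  intros t [hQt [htM ht]]. change (Rabs (Series (riemann_term t) - J) < eps).
  destruct (Series_riemann_bounds t ht) as [hlow hup].
  destruct (INR_unbounded (B / t)) as [N hN].
  assert (hNB : B < INR (S (S N)) * t).
  { apply (Rmult_lt_compat_r t) in hN; [| exact ht].
    replace (B / t * t) with B in hN by (field; lra).
    rewrite !S_INR. nra. }
  generalize (hQ t _ hQt (hB _ hNB)) (hlow N). intros hclose hle.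
  change (Rabs (RInt f t (INR (S (S N)) * t) - J) < eps / 2) in hclose.
  apply Rabs_lt_between in hclose. apply Rabs_lt_between. lra.
Qed.

End MonotoneRiemannSums.

Definition psi (s : R) : R := s * phi s.

Lemma sinh_PI_pos s : 0 < s -> 0 < sinh (PI * s).
Proof. intros hs. apply sinh_pos, Rmult_lt_0_compat; [exact PI_RGT_0 | exact hs]. Qed.

Lemma psi_sqr s : 0 < s -> psi s = (s / sinh (PI * s)) ^ 2.
Proof. intros hs. generalize (sinh_PI_pos s hs). intros. unfold psi, phi. field. lra. Qed.

Lemma psi_nonneg s : 0 < s -> 0 <= psi s.
Proof. intros hs. rewrite psi_sqr by exact hs. apply pow2_ge_0. Qed.

Lemma psi_le_inv_PI_sqr s : 0 < s -> psi s <= / PI ^ 2.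
Proof.
  intros hs. rewrite psi_sqr, <- pow_inv by exact hs. apply pow_incr.
  generalize (sinh_PI_pos s hs) (sinh_ge_id (PI * s) ltac:(generalize PI_RGT_0; nra)) PI_RGT_0.
  intros. split.
  - apply Rlt_le, Rdiv_lt_0_compat; lra.
  - apply (Rmult_le_reg_r (sinh (PI * s) * PI)); [nra |]. field_simplify; lra.
Qed.

Lemma psi_le_inv_sqr s : 1 <= s -> psi s <= / s ^ 2.
Proof.
  intros hs. rewrite psi_sqr, <- pow_inv by lra. apply pow_incr.
  generalize (sinh_PI_pos s ltac:(lra)) (sinh_ge_cube (PI * s) ltac:(generalize PI_RGT_0; nra)).
  intros hsh hcube.
  assert (27 * s ^ 3 <= (PI * s) ^ 3).
  { rewrite Rpow_mult_distr. apply Rmult_le_compat_r; [apply pow_le; lra |].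
    replace 27 with (3 ^ 3) by ring. apply pow_incr. generalize PI_gt_3; lra. }
  assert (hs2 : s * s <= sinh (PI * s)) by nra.
  split.
  - apply Rlt_le, Rdiv_lt_0_compat; lra.
  - apply (Rmult_le_reg_r (sinh (PI * s) * s)); [nra |]. field_simplify; lra.
Qed.

Lemma psi_antimono u v : 0 < u -> u <= v -> psi v <= psi u.
Proof.
  intros hu huv. rewrite !psi_sqr by lra.
  assert (hP := PI_RGT_0).
  assert (hm : sinh (PI * u) / u <= sinh (PI * v) / v).
  { apply (le_of_derive_nonneg (fun s => sinh (PI * s) / s)
      (fun s => (PI * s * cosh (PI * s) - sinh (PI * s)) / s ^ 2)); [exact huv | |].
    - intros x hx. unfold sinh, cosh. auto_derive; [lra | field; lra].
    - intros x hx. apply Rdiv_le_0_compat; [| apply pow_lt; lra].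
      generalize (sinh_le_mul_cosh (PI * x) ltac:(nra)). lra. }
  generalize (sinh_PI_pos u hu) (sinh_PI_pos v ltac:(lra)). intros hsu hsv.
  assert (0 < sinh (PI * u) / u) by (apply Rdiv_lt_0_compat; lra).
  replace (u / sinh (PI * u)) with (/ (sinh (PI * u) / u)) by (field; lra).
  replace (v / sinh (PI * v)) with (/ (sinh (PI * v) / v)) by (field; lra).
  apply pow_incr. split; [apply Rlt_le, Rinv_0_lt_compat; lra |].
  apply Rinv_le_contravar; lra.
Qed.

Lemma psi_continuous x : 0 < x -> continuous psi x.
Proof.
  intros hx. apply (ex_derive_continuous psi). generalize (sinh_PI_pos x hx).
  unfold psi, phi, sinh. intros hsh. auto_derive. apply Rgt_not_eq. unfold Rdiv in hsh. nra.
Qed.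

Lemma RInt_psi_le_length a b : 0 < a -> a <= b -> RInt psi a b <= b - a.
Proof.
  intros ha hab.
  assert (hPI : / PI ^ 2 <= 1).
  { rewrite <- Rinv_1. apply Rinv_le_contravar; [lra |]. generalize PI_gt_3. simpl. nra. }
  eapply Rle_trans; [apply Rle_abs |].
  eapply Rle_trans; [apply (abs_RInt_le_const _ _ _ (/ PI ^ 2)); [exact hab | |] |].
  - apply (ex_RInt_pos psi psi_continuous); lra.
  - intros x hx. rewrite Rabs_pos_eq by (apply psi_nonneg; lra). apply psi_le_inv_PI_sqr; lra.
  - rewrite <- (Rmult_1_r (b - a)) at 2. apply Rmult_le_compat_l; lra.
Qed.

Lemma RInt_psi_le_inv a b : 1 <= a -> a <= b -> RInt psi a b <= / a.
Proof.
  intros ha hab.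
  assert (hinv : is_RInt (fun s => / s ^ 2) a b (/ a - / b)).
  { replace (/ a - / b) with (minus (- / b) (- / a)) by (unfold minus, plus, opp; simpl; ring).
    apply (is_RInt_derive (fun s => - / s)); rewrite Rmin_left, Rmax_right by lra.
    - intros x hx. auto_derive; [lra | field; lra].
    - intros x hx. apply (ex_derive_continuous (fun s => / s ^ 2)).
      auto_derive. apply Rgt_not_eq. simpl. nra. }
  assert (RInt psi a b <= / a - / b).
  { rewrite <- (is_RInt_unique _ _ _ _ hinv).
    apply RInt_le; [exact hab | apply (ex_RInt_pos psi psi_continuous); lra |
                    eexists; exact hinv |].
    intros x hx. apply psi_le_inv_sqr; lra. }
  assert (0 < / b) by (apply Rinv_0_lt_compat; lra). lra.
Qed.

Lemma RInt_psi_le_2 a b : 0 < a -> a <= b -> RInt psi a b <= 2.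
Proof.
  intros ha hab.
  assert (hinv_le : forall c, 1 <= c -> / c <= 1)
    by (intros c hc; rewrite <- Rinv_1; apply Rinv_le_contravar; lra).
  destruct (Rle_lt_dec b 1) as [hb|hb]; [generalize (RInt_psi_le_length a b ha hab); lra |].
  destruct (Rle_lt_dec 1 a) as [ha1|ha1];
    [generalize (RInt_psi_le_inv a b ha1 hab) (hinv_le a ha1); lra |].
  rewrite <- (RInt_Chasles psi a 1 b) by (apply (ex_RInt_pos psi psi_continuous); lra).
  change (plus ?x ?y) with (Rplus x y).
  generalize (RInt_psi_le_length a 1 ha ltac:(lra)) (RInt_psi_le_inv 1 b ltac:(lra) ltac:(lra)).
  rewrite Rinv_1. lra.
Qed.

Lemma psi_improper : exists J : R, is_RInt_gen psi (at_right 0) (Rbar_locally p_infty) J.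
Proof.
  apply (is_RInt_gen_of_nonneg_bounded psi 2).
  - exact (ex_RInt_pos psi psi_continuous).
  - exact psi_nonneg.
  - exact RInt_psi_le_2.
Qed.

Definition Vscaled (x : R) : R := x * cosh x / sinh x - ln (2 * sinh x).

Lemma Vpos_Vscaled s : Vpos s = Vscaled (PI * s) / PI ^ 2.
Proof.
  unfold Vpos, Vscaled, Rdiv. set (z := / sinh (PI * s)). field. exact PI_neq0.
Qed.

Lemma cosh_le_3 x : 0 <= x <= 1 -> cosh x <= 3.
Proof.
  intros hx. unfold cosh.
  assert (exp x <= exp 1).
  { destruct (Rle_lt_or_eq_dec x 1 (proj2 hx)) as [h | h];
      [left; apply exp_increasing, h | rewrite h; lra]. }
  generalize exp_le_3 (exp_opp_le_1 x (proj1 hx)). lra.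
Qed.

Lemma abs_Vscaled_le_near_0 x : 0 < x <= 1 -> Rabs (Vscaled x) <= 9 + 2 / sqrt x.
Proof.
  intros hx. unfold Vscaled.
  assert (hsh := sinh_pos x (proj1 hx)).
  assert (hge := sinh_ge_id x ltac:(lra)).
  assert (hle := sinh_le_mul_cosh x ltac:(lra)).
  assert (hc1 := cosh_ge_1 x). assert (hc3 := cosh_le_3 x ltac:(lra)).
  assert (hcoth : 0 <= x * cosh x / sinh x <= 3).
  { split; [apply Rdiv_le_0_compat; nra |].
    apply (Rmult_le_reg_r (sinh x)); [exact hsh |]. field_simplify; nra. }
  assert (hsq : sqrt x <= sqrt (2 * sinh x)) by (apply sqrt_le_1_alt; lra).
  assert (hsx : 0 < sqrt x) by (apply sqrt_lt_R0; lra).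
  assert (hinv : 2 / sqrt (2 * sinh x) <= 2 / sqrt x).
  { unfold Rdiv. apply Rmult_le_compat_l; [lra |]. apply Rinv_le_contravar; lra. }
  generalize (abs_ln_le (2 * sinh x) ltac:(lra)). intros hln.
  eapply Rle_trans; [apply Rabs_triang |]. rewrite Rabs_Ropp, Rabs_pos_eq by lra. nra.
Qed.

Lemma Vscaled_exp_form x : 0 < x ->
  Vscaled x = 2 * x * exp (- (2 * x)) / (1 - exp (- (2 * x))) - ln (1 - exp (- (2 * x))).
Proof.
  intros hx. unfold Vscaled.
  assert (hE := exp_pos x). assert (hsh := sinh_pos x hx).
  assert (hy : exp (- (2 * x)) = / exp x ^ 2).
  { replace (- (2 * x)) with (- x + - x) by ring. rewrite exp_plus, exp_Ropp. field. lra. }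
  assert (hsinh : 2 * sinh x = exp x * (1 - exp (- (2 * x)))).
  { unfold sinh. rewrite hy, exp_Ropp. field. lra. }
  assert (hlt : exp (- (2 * x)) < 1) by (rewrite <- exp_0; apply exp_increasing; lra).
  rewrite hsinh, ln_mult, ln_exp by (generalize (exp_pos (- (2 * x))); lra).
  replace (x * cosh x / sinh x) with (2 * x * cosh x / (2 * sinh x)) by (field; lra).
  assert (1 < exp x) by (rewrite <- exp_0; apply exp_increasing; lra).
  rewrite hsinh. unfold cosh. rewrite hy, exp_Ropp. field. split; nra.
Qed.

(* With [y = exp (- 2 x)] both terms of [Vscaled x] are O(x y), and [y <= 6 / (2 x)^3]. *)
Lemma abs_Vscaled_le_large x : 1 <= x -> Rabs (Vscaled x) <= 4 / x ^ 2.
Proof.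
  intros hx. rewrite Vscaled_exp_form by lra. set (y := exp (- (2 * x))).
  assert (hE : y * exp (2 * x) = 1) by (unfold y; rewrite exp_Ropp; field; apply exp_neq_0).
  assert (hy0 : 0 < y) by apply exp_pos.
  assert (hy3 : 3 * y <= 1).
  { assert (y * (1 + 2 * x) <= y * exp (2 * x))
      by (apply Rmult_le_compat_l; [lra | apply exp_ineq1_le]). nra. }
  assert (hcube : x ^ 3 * y <= 3 / 4).
  { assert (y * (1 + (2 * x) ^ 3 / 6) <= y * exp (2 * x))
      by (apply Rmult_le_compat_l; [lra | apply exp_ge_1_cube; lra]). nra. }
  set (q := 2 * x * y / (1 - y)).
  assert (hq : 0 <= q <= 3 * x * y).
  { unfold q. split; [apply Rdiv_le_0_compat; nra |].
    assert (0 <= x * y * (1 - 3 * y)) by (apply Rmult_le_pos; nra).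
    apply (Rmult_le_reg_r (1 - y)); [lra |]. field_simplify; nra. }
  assert (hln : 0 <= - ln (1 - y) <= 3 / 2 * y).
  { split; [assert (ln (1 - y) <= 0) by (rewrite <- ln_1; apply ln_le; lra); lra |].
    rewrite <- ln_Rinv by lra. eapply Rle_trans; [apply ln_le_sub_1, Rinv_0_lt_compat; lra |].
    apply (Rmult_le_reg_r (1 - y)); [lra |]. field_simplify; nra. }
  assert (hx2 : 0 < x ^ 2) by (apply pow_lt; lra).
  assert (9 / 2 * (x * y) <= 4 / x ^ 2).
  { apply (Rmult_le_reg_r (x ^ 2)); [exact hx2 |]. field_simplify; nra. }
  apply Rabs_le. nra.
Qed.

Definition sVpos (s : R) : R := s * Vpos s.

Lemma abs_sVpos s : 0 < s -> Rabs (sVpos s) = s * Rabs (Vscaled (PI * s)) / PI ^ 2.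
Proof.
  intros hs. assert (hP : 0 < PI ^ 2) by (apply pow_lt, PI_RGT_0).
  unfold sVpos. rewrite Vpos_Vscaled, Rabs_mult, Rabs_div by lra.
  rewrite (Rabs_pos_eq s), (Rabs_pos_eq (PI ^ 2)) by lra. unfold Rdiv. ring.
Qed.

Lemma abs_sVpos_le_near_0 s : 0 < s -> PI * s <= 1 -> Rabs (sVpos s) <= 9 * s + 2 * sqrt s.
Proof.
  intros hs hs1. assert (hP := PI_gt_3).
  assert (hsq : 0 < sqrt s) by (apply sqrt_lt_R0, hs).
  assert (hA := abs_Vscaled_le_near_0 (PI * s) ltac:(split; nra)).
  assert (hinv : 2 / sqrt (PI * s) <= 2 / sqrt s).
  { unfold Rdiv. apply Rmult_le_compat_l; [lra |].
    apply Rinv_le_contravar; [exact hsq | apply sqrt_le_1_alt; nra]. }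
  assert (hdiv : s * (2 / sqrt s) = 2 * sqrt s).
  { rewrite <- (sqrt_sqrt s) at 1 by lra. field. lra. }
  rewrite abs_sVpos by exact hs.
  assert (hP2 : 1 <= PI ^ 2) by (simpl; nra).
  assert (s * Rabs (Vscaled (PI * s)) / PI ^ 2 <= s * Rabs (Vscaled (PI * s))).
  { unfold Rdiv. rewrite <- (Rmult_1_r (s * Rabs _)) at 2.
    apply Rmult_le_compat_l; [apply Rmult_le_pos; [lra | apply Rabs_pos] |].
    rewrite <- Rinv_1. apply Rinv_le_contravar; lra. }
  assert (s * Rabs (Vscaled (PI * s)) <= s * (9 + 2 / sqrt s))
    by (apply Rmult_le_compat_l; lra).
  lra.
Qed.

Lemma abs_sVpos_le_large s : 1 <= s -> Rabs (sVpos s) <= / s.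
Proof.
  intros hs. assert (hP := PI_gt_3).
  assert (hA := abs_Vscaled_le_large (PI * s) ltac:(nra)).
  rewrite abs_sVpos by lra.
  apply (Rmult_le_compat_l (s / PI ^ 2)) in hA;
    [| apply Rdiv_le_0_compat; [lra | apply pow_lt; lra]].
  replace (s / PI ^ 2 * (4 / (PI * s) ^ 2)) with (4 / PI ^ 4 * / s) in hA by (field; lra).
  assert (4 / PI ^ 4 <= 1).
  { assert (81 <= PI ^ 4) by (replace 81 with (3 ^ 4) by ring; apply pow_incr; lra).
    apply (Rmult_le_reg_r (PI ^ 4)); [lra |]. unfold Rdiv.
    rewrite Rmult_assoc, Rinv_l by lra. lra. }
  assert (0 < / s) by (apply Rinv_0_lt_compat; lra).
  replace (s * Rabs (Vscaled (PI * s)) / PI ^ 2) with (s / PI ^ 2 * Rabs (Vscaled (PI * s)))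
    by (field; lra).
  nra.
Qed.

Lemma filterlim_0_of_abs_le {T : Type} (F : (T -> Prop) -> Prop) {FF : Filter F}
    (f B : T -> R) :
  F (fun x => Rabs (f x) <= B x) -> filterlim B F (locally 0) -> filterlim f F (locally 0).
Proof.
  intros hb hB. apply filterlim_locally. intros eps.
  generalize (filter_and _ _ hb (proj1 (filterlim_locally B 0) hB eps)). apply filter_imp.
  intros x [h1 h2]. change (Rabs (f x - 0) < eps). change (Rabs (B x - 0) < eps) in h2.
  rewrite Rminus_0_r in *. apply Rabs_lt_between in h2. lra.
Qed.

Lemma sVpos_lim_0 : filterlim sVpos (at_right 0) (locally 0).
Proof.
  apply (filterlim_0_of_abs_le _ _ (fun s => 9 * s + 2 * sqrt s)).
  - assert (hP : 0 < / PI) by (apply Rinv_0_lt_compat, PI_RGT_0).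
    exists (mkposreal _ hP). intros s hs hs0. change (Rabs (s - 0) < / PI) in hs.
    rewrite Rminus_0_r, Rabs_pos_eq in hs by lra.
    apply abs_sVpos_le_near_0; [exact hs0 |].
    apply (Rmult_lt_compat_l PI) in hs; [| exact PI_RGT_0].
    rewrite Rinv_r in hs by apply PI_neq0. lra.
  - apply (filterlim_filter_le_1 (F := locally 0)); [apply filter_le_within |].
    replace 0 with (9 * 0 + 2 * sqrt 0) at 2 by (rewrite sqrt_0; ring).
    apply (continuous_plus (fun s => 9 * s) (fun s => 2 * sqrt s)).
    + apply (continuous_mult (fun _ => 9) (fun s => s));
        [apply continuous_const | apply continuous_id].
    + apply (continuous_mult (fun _ => 2) sqrt);
        [apply continuous_const | apply continuous_sqrt].
Qed.

Lemma sVpos_lim_infty : filterlim sVpos (Rbar_locally p_infty) (locally 0).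
Proof.
  apply (filterlim_0_of_abs_le _ _ Rinv).
  - exists 1. intros s hs. apply abs_sVpos_le_large. lra.
  - apply (filterlim_Rbar_inv p_infty). discriminate.
Qed.

Lemma is_derive_Vpos x : 0 < x -> is_derive Vpos x (- phi x).
Proof.
  intros hx. generalize (sinh_PI_pos x hx). unfold Vpos, phi, sinh, cosh. intros hs.
  assert (hP := PI_RGT_0).
  auto_derive; [repeat split; lra |].
  rewrite !exp_Ropp in *. set (E := exp (PI * x)) in *.
  assert (0 < E) by apply exp_pos.
  assert (E * / E = 1) by (field; lra).
  assert (E * E - 1 > 0) by nra.
  field. repeat split; lra.
Qed.

Lemma is_derive_sVpos x : 0 < x -> is_derive sVpos x (Vpos x - psi x).
Proof.
  intros hx. unfold sVpos.
  evar (d : R). replace (Vpos x - psi x) with d.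
  - apply (is_derive_mult (fun s => s) Vpos); [apply is_derive_id | apply is_derive_Vpos, hx |].
    intros; apply Rmult_comm.
  - unfold d, psi, plus, mult, one; simpl. ring.
Qed.

Lemma Vpos_continuous x : 0 < x -> continuous Vpos x.
Proof. intros hx. apply (ex_derive_continuous Vpos). eexists. apply is_derive_Vpos, hx. Qed.

Lemma V_improper_pos J :
  is_RInt_gen psi (at_right 0) (Rbar_locally p_infty) J ->
  is_RInt_gen V (at_right 0) (Rbar_locally p_infty) J.
Proof.
  intros hJ. apply (is_RInt_gen_ext Vpos).
  - generalize eventually_pos_pair. apply filter_imp. intros [a b] [ha hb] x hx. simpl in *.
    assert (0 < Rmin a b) by (apply Rmin_glb_lt; assumption).
    unfold V. rewrite Rabs_pos_eq by lra. reflexivity.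
  - apply (is_RInt_gen_add_vanishing_derive Vpos psi sVpos J is_derive_sVpos Vpos_continuous
             psi_continuous sVpos_lim_0 sVpos_lim_infty hJ).
Qed.

Lemma phi_eff_term_riemann t k : 0 < t -> phi_eff_term t k = / t ^ 2 * riemann_term psi t k.
Proof. intros ht. unfold phi_eff_term, riemann_term, psi. field. lra. Qed.

Lemma sqr_mul_phi_eff t : 0 < t -> t ^ 2 * phi_eff t = Series (riemann_term psi t).
Proof.
  intros ht. unfold phi_eff. rewrite (Series_ext _ _ (fun k => phi_eff_term_riemann t k ht)).
  rewrite Series_scal_l. field. lra.
Qed.

Lemma ex_series_phi_eff_term J :
  is_RInt_gen psi (at_right 0) (Rbar_locally p_infty) J ->
  forall t, 0 < t -> ex_series (phi_eff_term t).
Proof.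
  intros hJ t ht. apply (ex_series_ext (fun k => scal (/ t ^ 2) (riemann_term psi t k))).
  - intros k. symmetry. apply phi_eff_term_riemann, ht.
  - apply (ex_series_scal_l (V := R_NormedModule)).
    apply (ex_series_riemann psi (/ PI ^ 2) J);
      auto using psi_continuous, psi_nonneg, psi_antimono, psi_le_inv_PI_sqr.
Qed.

Theorem mainTheorem1 :
  (forall t : R, 0 < t -> ex_series (phi_eff_term t)) /\
  exists I1 I2 : R,
    is_RInt_gen V (Rbar_locally m_infty) (at_left 0) I1 /\
    is_RInt_gen V (at_right 0) (Rbar_locally p_infty) I2 /\
    filterlim (fun t => t ^ 2 * phi_eff t) (at_right 0) (locally ((I1 + I2) / 2)).
Proof.
  destruct psi_improper as [J hJ].
  assert (hV := V_improper_pos J hJ).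
  split; [exact (ex_series_phi_eff_term J hJ) |].
  exists J, J. split; [| split; [exact hV |]].
  - apply is_RInt_gen_even; [| exact hV]. intros x. unfold V. now rewrite Rabs_Ropp.
  - replace ((J + J) / 2) with J by field.
    apply (filterlim_ext_loc (fun t => Series (riemann_term psi t))).
    + exists (mkposreal 1 Rlt_0_1). intros t _ ht. symmetry. apply sqr_mul_phi_eff, ht.
    + apply (filterlim_Series_riemann psi (/ PI ^ 2) J);
        auto using psi_continuous, psi_nonneg, psi_antimono, psi_le_inv_PI_sqr.
Qed.
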